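(* Let $G$ be a group and $R$ a retract of $G$. Suppose $G$ is weakly hyperbolic relative to a collection of subgroups $\mathcal A=\{A_1,\ldots,A_m\}$ with $A_i\le R$ for all $i=1,\ldots,m$. Then $R$ is weakly hyperbolic relative to $\mathcal A$.
   Context: $R\le G$ is a retract if there is a homomorphism $G\to R$ restricting to the identity on $R$. For a group $G$ and a collection $\mathcal H=\{H_1,\ldots,H_m\}$ of subgroups, $X\subset G$ is a relative generating set if $G$ is generated by $X\cup H_1\cup\cdots\cup H_m$; the relative Cayley graph is the Cayley graph of $G$ with respect to $X\cup H_1\cup\cdots\cup H_m$ with combinatorial metric; $G$ is weakly hyperbolic relative to $\mathcal H$ if for some finite relative generating set $X$ this relative Cayley graph is hyperbolic. *)

From Stdlib Require Import List Arith.
Import ListNotations.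

Record Group := {
  gcar :> Type;
  gmul : gcar -> gcar -> gcar;
  ginv : gcar -> gcar;
  gone : gcar;
  gmul_assoc : forall x y z, gmul x (gmul y z) = gmul (gmul x y) z;
  gmul_1l : forall x, gmul gone x = x;
  gmul_Vl : forall x, gmul (ginv x) x = gone
}.

Arguments gmul {g} _ _.
Arguments ginv {g} _.
Arguments gone {g}.

Definition is_subgroup (G : Group) (H : G -> Prop) : Prop :=
  H gone /\ (forall x y, H x -> H y -> H (gmul x y)) /\ (forall x, H x -> H (ginv x)).

Definition is_hom (G : Group) (f : G -> G) : Prop :=
  forall x y, f (gmul x y) = gmul (f x) (f y).

Definition is_retract (G : Group) (R : G -> Prop) : Prop :=
  is_subgroup G R /\
  exists r : G -> G, is_hom G r /\ (forall g, R (r g)) /\ (forall g, R g -> r g = g).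

Definition in_gen (G : Group) (S : G -> Prop) (g : G) : Prop :=
  forall K : G -> Prop, is_subgroup G K -> (forall s, S s -> K s) -> K g.

Definition generates (G : Group) (H : G -> Prop) (S : G -> Prop) : Prop :=
  forall g, H g <-> in_gen G S g.

Fixpoint word_prod (G : Group) (l : list G) : G :=
  match l with [] => gone | s :: l' => gmul s (word_prod G l') end.

Definition word_len_le (G : Group) (S : G -> Prop) (g : G) (n : nat) : Prop :=
  exists l : list G, length l <= n /\ Forall (fun s => S s \/ S (ginv s)) l
                     /\ word_prod G l = g.

Definition cay_dist (G : Group) (S : G -> Prop) (x y : G) (n : nat) : Prop :=
  word_len_le G S (gmul (ginv x) y) n /\
  forall m, word_len_le G S (gmul (ginv x) y) m -> n <= m.

(* Gromov hyperbolicity of the Cayley graph of H w.r.t. S (vertex set H),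
   via the four-point condition:
   d(x,y)+d(z,w) <= max(d(x,z)+d(y,w), d(x,w)+d(y,z)) + 2 delta *)
Definition cayley_hyperbolic (G : Group) (H : G -> Prop) (S : G -> Prop) : Prop :=
  exists delta : nat,
    forall x y z w : G, H x -> H y -> H z -> H w ->
    forall dxy dzw dxz dyw dxw dyz : nat,
      cay_dist G S x y dxy -> cay_dist G S z w dzw ->
      cay_dist G S x z dxz -> cay_dist G S y w dyw ->
      cay_dist G S x w dxw -> cay_dist G S y z dyz ->
      dxy + dzw <= Nat.max (dxz + dyw) (dxw + dyz) + 2 * delta.

Definition rel_gens (G : Group) (X : list G) (Hs : list (G -> Prop)) (g : G) : Prop :=
  In g X \/ exists Hi, In Hi Hs /\ Hi g.

Definition weakly_hyperbolic_rel (G : Group) (H : G -> Prop) (Hs : list (G -> Prop)) : Prop :=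
  exists X : list G,
    (forall x, In x X -> H x) /\
    generates G H (rel_gens G X Hs) /\
    cayley_hyperbolic G H (rel_gens G X Hs).

(* The retraction r maps words in S = X ∪ ⋃ A_i to words of the same length in
   S' = r(X) ∪ ⋃ A_i, and the finitely many letters of r(X) have bounded S-length,
   so on R the Cayley distances satisfy d_S' <= d_S <= C d_S'.  Hence every
   d_S'-geodesic is a C-path in the δ-hyperbolic graph of (G, S) whose length is
   bounded by its d_S-distances.  Such paths stay uniformly close to d_S-geodesics
   (a C-path avoiding a D-ball around a point of a geodesic between its endpoints
   must have length exponential in D), so d_S'-triangles are uniformly thin, and
   thin triangles give the four-point condition for d_S'. *)

From Stdlib Require Import List Arith Lia Classical ClassicalEpsilon.
Import ListNotations.

Lemma Forall_firstn {A} (P : A -> Prop) n (l : list A) : Forall P l -> Forall P (firstn n l).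
Proof. intros H; rewrite <- (firstn_skipn n l) in H; now apply Forall_app in H as []. Qed.

Lemma Forall_skipn {A} (P : A -> Prop) n (l : list A) : Forall P l -> Forall P (skipn n l).
Proof. intros H; rewrite <- (firstn_skipn n l) in H; now apply Forall_app in H as []. Qed.

Lemma ex_least (P : nat -> Prop) :
  (exists n, P n) -> exists n, P n /\ forall m, P m -> n <= m.
Proof.
  intros [n Pn]; induction n as [n IH] using lt_wf_ind.
  destruct (classic (exists m, m < n /\ P m)) as [[m [ltmn Pm]] | Hnone].
  - exact (IH m ltmn Pm).
  - exists n; split; [exact Pn |].
    intros m Pm; destruct (le_lt_dec n m) as [le_nm | lt_mn]; [exact le_nm |].
    exfalso; eauto.
Qed.

Lemma ex_least_le (P : nat -> Prop) m :
  P m -> exists j, j <= m /\ P j /\ (j = 0 \/ ~ P (j - 1)).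
Proof.
  intros Pm; destruct (ex_least P (ex_intro _ m Pm)) as [j [Pj Hmin]].
  exists j; split; [now apply Hmin | split; [exact Pj |]].
  destruct j as [| j]; [now left | right].
  intros Pj'; specialize (Hmin _ Pj'); lia.
Qed.

Lemma ex_greatest_bounded (P : nat -> Prop) B :
  (exists n, P n) -> (forall n, P n -> n <= B) ->
  exists n, P n /\ forall m, P m -> m <= n.
Proof.
  revert P; induction B as [| B IH]; intros P [n0 Pn0] Hbound.
  - exists n0; split; [exact Pn0 |].
    intros m Pm; specialize (Hbound _ Pm); lia.
  - destruct (classic (P (S B))) as [PSB | nPSB].
    + exists (S B); split; [exact PSB | exact Hbound].
    + apply IH; [now exists n0 |].
      intros m Pm; specialize (Hbound _ Pm).
      assert (m <> S B) by (intros ->; contradiction); lia.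
Qed.

Lemma square_le_pow2 t : t * t <= 2 ^ t + 2.
Proof.
  assert (Hlin : forall t, 3 <= t -> 2 * t + 1 <= 2 ^ t).
  { induction t0 as [| t0 IH]; intros Ht; [lia |].
    destruct (Nat.eq_dec t0 2) as [-> | ne]; [simpl; lia |].
    specialize (IH ltac:(lia)); rewrite Nat.pow_succ_r'; lia. }
  induction t as [| t IH]; [simpl; lia |].
  destruct (le_lt_dec t 2) as [le | lt].
  - destruct t as [| [| [| t]]]; simpl; lia.
  - specialize (Hlin t ltac:(lia)); rewrite Nat.pow_succ_r'; nia.
Qed.

Definition morse_bound (C δ : nat) : nat := C + δ * (4 * C + 16 * δ + 3).

Lemma linear_log_bound C δ D :
  2 * D <= C + 2 * (δ * (Nat.log2 (8 * D) + 1)) -> D <= morse_bound C δ.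
Proof.
  intros H; unfold morse_bound.
  destruct D as [| D']; [lia |].
  pose proof (Nat.log2_spec (8 * S D') ltac:(lia)) as [Hlog _].
  set (t := Nat.log2 (8 * S D')) in *.
  pose proof (square_le_pow2 t).
  assert (t <= 4 * C + 16 * δ + 2) by nia.
  nia.
Qed.

Definition fellow_bound (C δ : nat) : nat := C * (2 * morse_bound C δ + 1) + morse_bound C δ.

Definition thin_bound (C δ : nat) : nat := fellow_bound C δ + (3 * δ + 1) + morse_bound C δ.

Definition between {T} (d : T -> T -> nat) (x p y : T) : Prop := d x p + d p y = d x y.

Definition concat_path {T} (u1 : nat -> T) (N1 : nat) (u2 : nat -> T) : nat -> T :=
  fun t => if t <=? N1 then u1 t else u2 (t - N1).

Lemma concat_path_end {T} (u1 u2 : nat -> T) N1 N2 :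
  u1 N1 = u2 0 -> concat_path u1 N1 u2 (N1 + N2) = u2 N2.
Proof.
  intros E; unfold concat_path; destruct (Nat.leb_spec (N1 + N2) N1).
  - replace N2 with 0 by lia; now rewrite Nat.add_0_r.
  - f_equal; lia.
Qed.

Lemma concat_path_forall {T} (P : T -> Prop) (u1 u2 : nat -> T) N1 N2 :
  (forall t, t <= N1 -> P (u1 t)) -> (forall t, t <= N2 -> P (u2 t)) ->
  forall t, t <= N1 + N2 -> P (concat_path u1 N1 u2 t).
Proof.
  intros H1 H2 t Ht; unfold concat_path; destruct (Nat.leb_spec t N1).
  - apply H1; lia.
  - apply H2; lia.
Qed.

Section HyperbolicSpace.
Variables (T : Type) (d : T -> T -> nat).
Hypothesis d_refl : forall x, d x x = 0.
Hypothesis d_sym : forall x y, d x y = d y x.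
Hypothesis d_tri : forall x y z, d x z <= d x y + d y z.
Hypothesis d_geo : forall a b, exists g : nat -> T, g 0 = a /\ g (d a b) = b /\
  forall i j, i <= j <= d a b -> d (g i) (g j) = j - i.
Variable δ : nat.
Hypothesis d_four : forall x y z w,
  d x y + d z w <= Nat.max (d x z + d y w) (d x w + d y z) + 2 * δ.

Definition cpath (C : nat) (u : nat -> T) (N : nat) : Prop :=
  forall t, t < N -> d (u t) (u (S t)) <= C.

Lemma cpath_concat C u1 N1 u2 N2 :
  u1 N1 = u2 0 -> cpath C u1 N1 -> cpath C u2 N2 ->
  cpath C (concat_path u1 N1 u2) (N1 + N2).
Proof.
  intros E H1 H2 t Ht; unfold concat_path.
  destruct (Nat.leb_spec t N1), (Nat.leb_spec (S t) N1).
  - apply H1; lia.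
  - replace t with N1 by lia; rewrite E.
    replace (S N1 - N1) with 1 by lia; apply H2; lia.
  - lia.
  - replace (S t - N1) with (S (t - N1)) by lia; apply H2; lia.
Qed.

Lemma geodesic_param a b : exists g : nat -> T,
  g 0 = a /\ g (d a b) = b /\ cpath 1 g (d a b) /\
  forall t, t <= d a b -> d a (g t) = t /\ d (g t) b = d a b - t.
Proof.
  destruct (d_geo a b) as [g [g0 [g1 Hg]]]; exists g; repeat split; auto.
  - intros t Ht; rewrite Hg; lia.
  - rewrite <- g0 at 1; rewrite Hg; lia.
  - rewrite <- g1 at 1; rewrite Hg; lia.
Qed.

Lemma geodesic_point a b k : k <= d a b -> exists c, d a c = k /\ d c b = d a b - k.
Proof.
  intros Hk; destruct (geodesic_param a b) as [g [_ [_ [_ Hg]]]].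
  exists (g k); exact (Hg k Hk).
Qed.

(* Take the first point [g j] of a geodesic from [a] with Gromov product
   [(q | b)_(g j) <= δ]; the four-point condition at [g (j - 1)] bounds [d (g j) q]. *)
Lemma near_geodesic_of_gromov a b q :
  d a q + d q b <= d a b + 2 * δ -> exists p, between d a p b /\ d p q <= 3 * δ + 1.
Proof.
  intros Hq.
  destruct (geodesic_param a b) as [g [g0 [g1 [g_step g_dist]]]].
  set (P j := d (g j) q + d a b <= d a (g j) + d b q + 2 * δ).
  destruct (ex_least_le P (d a b)) as [j [Hj [Pj Hprev]]].
  { unfold P; rewrite g1; lia. }
  exists (g j); split; [destruct (g_dist j Hj); unfold between; lia |].
  destruct (g_dist j Hj) as [Eaj Ejb].
  destruct Hprev as [-> | Hprev].
  { unfold P in Pj; rewrite g0, d_refl in *; rewrite (d_sym b q) in Pj; lia. }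
  assert (j <> 0) by (intros ->; contradiction).
  unfold P in Pj, Hprev; destruct (g_dist (j - 1) ltac:(lia)) as [Eaj' Ej'b].
  pose proof (d_four a b (g (j - 1)) q).
  pose proof (g_step (j - 1) ltac:(lia)) as Hstep; replace (S (j - 1)) with j in Hstep by lia.
  pose proof (d_tri (g j) (g (j - 1)) q).
  rewrite (d_sym (g j) (g (j - 1))) in *; rewrite (d_sym b (g (j - 1))), (d_sym b q) in *.
  lia.
Qed.

(* Split the path at its midpoint and apply the four-point condition to its
   endpoints, the midpoint and [q]. *)
Lemma far_path_gromov (u : nat -> T) C q D : forall k a b, a <= b -> b - a <= 2 ^ k ->
  (forall t, a <= t < b -> d (u t) (u (S t)) <= C) ->
  (forall t, a <= t <= b -> D <= d q (u t)) ->
  2 * D + d (u a) (u b) <= d (u a) q + d (u b) q + C + 2 * (δ * k).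
Proof.
  induction k as [| k IH]; intros a b Hab Hlen Hstep Hfar.
  - simpl in Hlen; destruct (Nat.eq_dec a b) as [<- | ne].
    + rewrite d_refl; pose proof (Hfar a ltac:(lia)); rewrite (d_sym q (u a)) in *; lia.
    + replace b with (S a) in * by lia.
      pose proof (Hstep a ltac:(lia)); pose proof (Hfar a ltac:(lia));
        pose proof (Hfar (S a) ltac:(lia)).
      rewrite (d_sym q (u a)), (d_sym q (u (S a))) in *; lia.
  - rewrite Nat.mul_succ_r; rewrite Nat.pow_succ_r' in Hlen.
    destruct (le_lt_dec (b - a) (2 ^ k)) as [short | long].
    + specialize (IH a b Hab short Hstep Hfar); lia.
    + set (m := a + 2 ^ k).
      pose proof (IH a m ltac:(lia) ltac:(lia) ltac:(intros; apply Hstep; lia)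
                    ltac:(intros; apply Hfar; lia)).
      pose proof (IH m b ltac:(lia) ltac:(lia) ltac:(intros; apply Hstep; lia)
                    ltac:(intros; apply Hfar; lia)).
      pose proof (d_four (u a) (u b) (u m) q).
      rewrite (d_sym (u b) (u m)) in *; lia.
Qed.

Lemma detour_bound C u N p D :
  cpath C u N -> N <= 8 * D -> (forall t, t <= N -> D <= d p (u t)) ->
  d (u 0) p + d p (u N) <= d (u 0) (u N) -> D <= morse_bound C δ.
Proof.
  intros Hpath HN Hfar Hp.
  destruct (Nat.eq_dec D 0) as [-> | HD]; [lia |].
  pose proof (Nat.log2_spec (8 * D) ltac:(lia)) as [_ Hlog].
  pose proof (far_path_gromov u C p D (S (Nat.log2 (8 * D))) 0 N ltac:(lia) ltac:(lia)
                ltac:(intros; apply Hpath; lia) ltac:(intros; apply Hfar; lia)).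
  apply linear_log_bound; rewrite (d_sym (u N) p) in *; lia.
Qed.

Section Morse.
Variables (σ : nat -> T) (n C : nat).
Hypothesis C_pos : 1 <= C.
Hypothesis σ_cpath : cpath C σ n.
Hypothesis σ_lower : forall i j, i <= j <= n -> j - i <= d (σ i) (σ j).

Lemma path_dist_le i j : i <= j <= n -> d (σ i) (σ j) <= C * (j - i).
Proof.
  intros [Hij Hjn]; induction j as [| j IH].
  - replace i with 0 by lia; rewrite d_refl; lia.
  - destruct (Nat.eq_dec i (S j)) as [-> | ne]; [rewrite d_refl; lia |].
    specialize (IH ltac:(lia) ltac:(lia)); pose proof (σ_cpath j ltac:(lia)).
    pose proof (d_tri (σ i) (σ j) (σ (S j))).
    replace (S j - i) with (S (j - i)) by lia; rewrite Nat.mul_succ_r; lia.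
Qed.

Lemma subpath i j : i <= n -> j <= n -> exists (s : nat -> T) L,
  s 0 = σ i /\ s L = σ j /\ L <= d (σ i) (σ j) /\ cpath C s L /\
  forall t, t <= L -> exists k, k <= n /\ s t = σ k.
Proof.
  intros Hi Hj; destruct (le_lt_dec i j).
  - exists (fun t => σ (i + t)), (j - i); repeat split.
    + now rewrite Nat.add_0_r.
    + f_equal; lia.
    + apply σ_lower; lia.
    + intros t Ht; rewrite Nat.add_succ_r; apply σ_cpath; lia.
    + intros t Ht; exists (i + t); split; [lia | reflexivity].
  - exists (fun t => σ (i - t)), (i - j); repeat split.
    + now rewrite Nat.sub_0_r.
    + f_equal; lia.
    + rewrite d_sym; apply σ_lower; lia.
    + intros t Ht; rewrite d_sym; replace (i - t) with (S (i - S t)) by lia.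
      apply σ_cpath; lia.
    + intros t Ht; exists (i - t); split; [lia | reflexivity].
Qed.

Lemma approach_point D p0 ie :
  (forall p, between d (σ 0) p (σ n) -> exists i, i <= n /\ d p (σ i) <= D) ->
  (forall k, k <= n -> D <= d p0 (σ k)) -> ie <= n ->
  (forall c, between d (σ ie) c p0 -> between d (σ 0) c (σ n)) ->
  exists c i, i <= n /\ between d (σ ie) c p0 /\ d c p0 <= 2 * D /\
              d c (σ i) + D <= d c p0.
Proof.
  intros Hnear Hfar Hie Hbetween.
  destruct (le_lt_dec (2 * D) (d (σ ie) p0)) as [far | close].
  - destruct (geodesic_point (σ ie) p0 (d (σ ie) p0 - 2 * D) ltac:(lia)) as [c [Ec1 Ec2]].
    assert (Hc : between d (σ ie) c p0) by (unfold between; lia).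
    destruct (Hnear c (Hbetween c Hc)) as [i [Hi Hci]].
    exists c, i; repeat split; auto; lia.
  - exists (σ ie), ie; unfold between; rewrite !d_refl.
    pose proof (Hfar ie Hie); rewrite (d_sym p0) in *.
    repeat split; auto; lia.
Qed.

Lemma avoiding_path D p0 c1 i1 c2 i2 : i1 <= n -> i2 <= n ->
  (forall k, k <= n -> D <= d p0 (σ k)) ->
  d c1 (σ i1) + D <= d c1 p0 -> d c2 (σ i2) + D <= d c2 p0 ->
  exists u N, u 0 = c1 /\ u N = c2 /\ cpath C u N /\
    N <= d c1 (σ i1) + d (σ i1) (σ i2) + d c2 (σ i2) /\
    forall t, t <= N -> D <= d p0 (u t).
Proof.
  intros Hi1 Hi2 Hfar Hc1 Hc2.
  destruct (geodesic_param c1 (σ i1)) as [g1 [g10 [g1e [g1_step g1_dist]]]].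
  destruct (subpath i1 i2 Hi1 Hi2) as [s [L [s0 [sL [HL [s_step s_on]]]]]].
  destruct (geodesic_param (σ i2) c2) as [g2 [g20 [g2e [g2_step g2_dist]]]].
  rewrite (d_sym (σ i2) c2) in *.
  set (a1 := d c1 (σ i1)) in *; set (a2 := d c2 (σ i2)) in *.
  exists (concat_path g1 a1 (concat_path s L g2)), (a1 + (L + a2)); repeat split.
  - exact g10.
  - rewrite !concat_path_end; [exact g2e | rewrite sL; auto | exact (eq_trans g1e (eq_sym s0))].
  - apply cpath_concat; [exact (eq_trans g1e (eq_sym s0)) | |].
    + intros t Ht; apply Nat.le_trans with 1; [apply g1_step |]; lia.
    + apply cpath_concat; [rewrite sL; auto | exact s_step |].
      intros t Ht; apply Nat.le_trans with 1; [apply g2_step |]; lia.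
  - lia.
  - apply (concat_path_forall (fun v => D <= d p0 v));
      [| apply (concat_path_forall (fun v => D <= d p0 v))].
    + intros t Ht; destruct (g1_dist t Ht).
      pose proof (d_tri c1 (g1 t) p0); rewrite (d_sym (g1 t) p0) in *; lia.
    + intros t Ht; destruct (s_on t Ht) as [k [Hk ->]]; auto.
    + intros t Ht; destruct (g2_dist t Ht).
      pose proof (d_tri c2 (g2 t) p0); rewrite (d_sym (g2 t) p0), (d_sym c2 (g2 t)) in *; lia.
Qed.

(* Let [D] be the largest distance from a point [p0] of the geodesic to the path.
   Joining the path to the geodesic on both sides of [p0] gives a detour of length
   at most [8 D] around the [D]-ball of [p0], so [detour_bound] applies. *)
Theorem geodesic_near_path p :
  between d (σ 0) p (σ n) -> exists i, i <= n /\ d p (σ i) <= morse_bound C δ.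
Proof.
  set (Far m := exists p, between d (σ 0) p (σ n) /\ forall k, k <= n -> m <= d p (σ k)).
  destruct (ex_greatest_bounded Far (d (σ 0) (σ n))) as [D [[p0 [Hp0 Hfar]] Hmax]].
  { exists 0, (σ 0); split; [unfold between; rewrite d_refl | ]; lia. }
  { intros m [q [Hq Hm]]; specialize (Hm 0 ltac:(lia)).
    unfold between in Hq; rewrite d_sym in Hm; lia. }
  assert (Hnear : forall q, between d (σ 0) q (σ n) -> exists i, i <= n /\ d q (σ i) <= D).
  { intros q Hq; apply NNPP; intros Hnone.
    enough (HS : Far (S D)) by (specialize (Hmax _ HS); lia).
    exists q; split; [exact Hq |]; intros k Hk.
    destruct (le_lt_dec (S D) (d q (σ k))); [assumption |].
    exfalso; apply Hnone; exists k; split; [exact Hk | lia]. }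
  enough (HD : D <= morse_bound C δ).
  { intros Hp; destruct (Hnear p Hp) as [i [Hi Hpi]]; exists i; split; [exact Hi | lia]. }
  unfold between in Hp0.
  destruct (approach_point D p0 0 Hnear Hfar ltac:(lia))
    as [c1 [i1 [Hi1 [Hc1 [Hc1p0 Hc1far]]]]].
  { intros c Hc; unfold between in *.
    pose proof (d_tri (σ 0) c (σ n)); pose proof (d_tri c p0 (σ n)); lia. }
  destruct (approach_point D p0 n Hnear Hfar ltac:(lia))
    as [c2 [i2 [Hi2 [Hc2 [Hc2p0 Hc2far]]]]].
  { intros c Hc; unfold between in *.
    pose proof (d_tri (σ 0) c (σ n)); pose proof (d_tri (σ 0) p0 c).
    rewrite (d_sym p0 c), (d_sym c (σ n)), (d_sym p0 (σ n)) in *; lia. }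
  unfold between in Hc1, Hc2.
  destruct (avoiding_path D p0 c1 i1 c2 i2 Hi1 Hi2 Hfar Hc1far Hc2far)
    as [u [N [u0 [uN [u_path [HN u_far]]]]]].
  apply (detour_bound C u N p0 D u_path); [| exact u_far |]; rewrite ?u0, ?uN.
  - pose proof (d_tri (σ i1) c1 (σ i2)); pose proof (d_tri c1 p0 (σ i2));
      pose proof (d_tri p0 c2 (σ i2)).
    rewrite (d_sym (σ i1) c1), (d_sym p0 c2) in *; lia.
  - pose proof (d_tri (σ 0) c1 (σ n)); pose proof (d_tri c1 c2 (σ n)).
    rewrite (d_sym p0 c2), (d_sym p0 (σ n)), (d_sym c2 (σ n)) in *; lia.
Qed.

Lemma path_near_geodesic i : i <= n ->
  exists q, between d (σ 0) q (σ n) /\ d (σ i) q <= fellow_bound C δ.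
Proof.
  intros Hi; unfold fellow_bound; set (K := morse_bound C δ).
  destruct (geodesic_param (σ 0) (σ n)) as [g [g0 [g1 [g_step g_dist]]]].
  set (m := d (σ 0) (σ n)) in *.
  assert (Hg : forall j, j <= m -> between d (σ 0) (g j) (σ n)).
  { intros j Hj; destruct (g_dist j Hj); unfold between; fold m; lia. }
  set (Before j := exists k, k <= i /\ d (g j) (σ k) <= K).
  destruct (classic (Before m)) as [[k [Hk Hgk]] | Hm].
  - exists (σ n); split; [unfold between; rewrite d_refl; lia |].
    rewrite g1, d_sym in Hgk.
    pose proof (σ_lower k n ltac:(lia)); pose proof (path_dist_le i n ltac:(lia)).
    assert (C * (n - i) <= C * K) by (apply Nat.mul_le_mono_l; lia); nia.
  - destruct (ex_least_le (fun j => ~ Before j) m Hm) as [j [Hj [Hnb Hprev]]].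
    assert (Before 0) by (exists 0; split; [lia | rewrite g0, d_refl; lia]).
    assert (j <> 0) by (intros ->; contradiction).
    destruct Hprev as [-> | Hprev]; [contradiction |].
    apply NNPP in Hprev; destruct Hprev as [k [Hk Hgk]].
    destruct (geodesic_near_path (g j) (Hg j Hj)) as [k' [Hk' Hgk']].
    assert (i < k') by (destruct (le_lt_dec k' i); [exfalso; apply Hnb; now exists k' | lia]).
    pose proof (g_step (j - 1) ltac:(lia)) as Hstep; replace (S (j - 1)) with j in Hstep by lia.
    pose proof (σ_lower k k' ltac:(lia)).
    pose proof (d_tri (σ k) (g (j - 1)) (σ k')); pose proof (d_tri (g (j - 1)) (g j) (σ k')).
    rewrite (d_sym (σ k) (g (j - 1))) in *.
    pose proof (path_dist_le k i ltac:(lia)).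
    assert (C * (i - k) <= C * (2 * K + 1)) by (apply Nat.mul_le_mono_l; lia).
    exists (g (j - 1)); split; [apply Hg; lia |].
    pose proof (d_tri (σ i) (σ k) (g (j - 1))).
    rewrite (d_sym (σ i) (σ k)), (d_sym (σ k) (g (j - 1))) in *; lia.
Qed.

End Morse.

Section Comparison.
Variables (V : T -> Prop) (dY : T -> T -> nat) (C : nat).
Hypothesis C_pos : 1 <= C.
Hypothesis dY_refl : forall x, V x -> dY x x = 0.
Hypothesis dY_sym : forall x y, V x -> V y -> dY x y = dY y x.
Hypothesis dY_tri : forall x y z, V x -> V y -> V z -> dY x z <= dY x y + dY y z.

Definition ygeodesic (σ : nat -> T) (a b : T) : Prop :=
  (forall t, V (σ t)) /\ σ 0 = a /\ σ (dY a b) = b /\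
  forall i j, i <= j <= dY a b -> dY (σ i) (σ j) = j - i.

Hypothesis dY_geo : forall a b, V a -> V b -> exists σ, ygeodesic σ a b.
Hypothesis dY_le_d : forall a b, V a -> V b -> dY a b <= d a b.
Hypothesis d_le_of_dY_le1 : forall a b, V a -> V b -> dY a b <= 1 -> d a b <= C.

Lemma ygeodesic_cpath σ a b : ygeodesic σ a b -> cpath C σ (dY a b).
Proof. intros [HV [_ [_ Hσ]]] t Ht; apply d_le_of_dY_le1; auto; rewrite Hσ; lia. Qed.

Lemma ygeodesic_lower σ a b : ygeodesic σ a b ->
  forall i j, i <= j <= dY a b -> j - i <= d (σ i) (σ j).
Proof. intros [HV [_ [_ Hσ]]] i j Hij; rewrite <- Hσ by lia; apply dY_le_d; auto. Qed.

Lemma ygeodesic_between σ a b : ygeodesic σ a b ->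
  forall k, k <= dY a b -> between dY a (σ k) b.
Proof.
  intros [HV [σ0 [σ1 Hσ]]] k Hk; unfold between.
  rewrite <- σ0 at 1; rewrite <- σ1 at 1; rewrite !Hσ by lia; lia.
Qed.

Lemma near_ygeodesic a b q σ : ygeodesic σ a b -> d a q + d q b <= d a b + 2 * δ ->
  exists k, k <= dY a b /\ d q (σ k) <= 3 * δ + 1 + morse_bound C δ.
Proof.
  intros Hσ Hq.
  destruct (near_geodesic_of_gromov a b q Hq) as [p [Hp Hpq]].
  pose proof Hσ as [_ [σ0 [σ1 _]]].
  destruct (geodesic_near_path σ (dY a b) C C_pos (ygeodesic_cpath σ a b Hσ)
              (ygeodesic_lower σ a b Hσ) p) as [k [Hk Hpk]]; [now rewrite σ0, σ1 |].
  exists k; split; [exact Hk |].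
  pose proof (d_tri q p (σ k)); rewrite (d_sym q p) in *; lia.
Qed.

Lemma ytriangle_thin x y z σ : V x -> V y -> V z -> ygeodesic σ x y ->
  forall i, i <= dY x y -> exists p, V p /\ (between dY x p z \/ between dY z p y) /\
                                     dY (σ i) p <= thin_bound C δ.
Proof.
  intros Vx Vy Vz Hσ i Hi.
  destruct (path_near_geodesic σ (dY x y) C C_pos (ygeodesic_cpath σ x y Hσ)
              (ygeodesic_lower σ x y Hσ) i Hi) as [q [Hq Hiq]].
  pose proof Hσ as [σV [σ0 [σ1 _]]]; rewrite σ0, σ1 in Hq; unfold between in Hq.
  assert (Hside : forall a b, V a -> V b -> d a q + d q b <= d a b + 2 * δ ->
                  exists p, V p /\ between dY a p b /\ dY (σ i) p <= thin_bound C δ).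
  { intros a b Va Vb Hab; destruct (dY_geo a b Va Vb) as [τ Hτ].
    destruct (near_ygeodesic a b q τ Hτ Hab) as [k [Hk Hqk]].
    pose proof Hτ as [τV _].
    exists (τ k); split; [apply τV | split; [apply (ygeodesic_between τ a b Hτ k Hk) |]].
    rewrite dY_le_d by auto; pose proof (d_tri (σ i) q (τ k)).
    unfold thin_bound; lia. }
  pose proof (d_four x y z q); rewrite (d_sym y q), (d_sym y z) in *.
  destruct (le_lt_dec (d x q + d q z) (d x z + 2 * δ)) as [Hxz | Hzy].
  - destruct (Hside x z Vx Vz Hxz) as [p [Vp [Hp Hip]]]; exists p; auto.
  - destruct (Hside z y Vz Vy ltac:(rewrite (d_sym z q) in *; lia)) as [p [Vp [Hp Hip]]].
    exists p; auto.
Qed.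

(* [σ j] is the first point of [σ] that is close to the side [w y]; by thinness
   its predecessor is close to the side [x w]. *)
Lemma ytriangle_center x y w σ : V x -> V y -> V w -> ygeodesic σ x y ->
  exists j, j <= dY x y /\
    2 * dY w (σ j) + dY x y <= dY x w + dY y w + 4 * thin_bound C δ + 2.
Proof.
  intros Vx Vy Vw Hσ; set (K := thin_bound C δ).
  pose proof Hσ as [σV [σ0 [σ1 σ_geo]]].
  set (Close j := exists p, V p /\ between dY w p y /\ dY (σ j) p <= K).
  destruct (ex_least_le Close (dY x y)) as [j [Hj [[p2 [Vp2 [Hp2 Hjp2]]] Hprev]]].
  { exists y; split; [exact Vy |]; unfold between; rewrite σ1, dY_refl by auto; lia. }
  assert (Hp1 : exists p1, V p1 /\ between dY x p1 w /\ dY (σ j) p1 <= K + 1).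
  { destruct Hprev as [-> | Hprev].
    - exists x; split; [exact Vx |]; unfold between; rewrite σ0, !dY_refl by auto; lia.
    - assert (j <> 0) by (intros ->; apply Hprev; exists p2; auto).
      destruct (ytriangle_thin x y w σ Vx Vy Vw Hσ (j - 1) ltac:(lia))
        as [p1 [Vp1 [[Hp1 | Hp1] Hjp1]]]; [| exfalso; apply Hprev; now exists p1].
      exists p1; split; [exact Vp1 | split; [exact Hp1 |]].
      pose proof (dY_tri (σ j) (σ (j - 1)) p1 (σV _) (σV _) Vp1).
      assert (dY (σ j) (σ (j - 1)) = 1) by (rewrite dY_sym, σ_geo by (auto || lia); lia).
      lia. }
  destruct Hp1 as [p1 [Vp1 [Hp1 Hjp1]]].
  exists j; split; [exact Hj |].
  pose proof (ygeodesic_between σ x y Hσ j Hj) as Hq; set (q := σ j) in *.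
  assert (Vq : V q) by apply σV.
  unfold between in Hp1, Hp2, Hq.
  pose proof (dY_tri x p1 q Vx Vp1 Vq); pose proof (dY_tri q p2 y Vq Vp2 Vy).
  pose proof (dY_tri w p1 q Vw Vp1 Vq); pose proof (dY_tri w p2 q Vw Vp2 Vq).
  rewrite (dY_sym p1 q), (dY_sym p2 q), (dY_sym p1 w), (dY_sym y w) in * by auto.
  lia.
Qed.

Lemma four_point_of_center x y z w q p K : V x -> V y -> V z -> V w -> V q -> V p ->
  between dY x q y -> between dY x p z \/ between dY z p y -> dY q p <= K ->
  2 * dY w q + dY x y <= dY x w + dY y w + 4 * K + 2 ->
  dY x y + dY z w <= Nat.max (dY x z + dY y w) (dY x w + dY y z) + 2 * (3 * K + 1).
Proof.
  intros Vx Vy Vz Vw Vq Vp Hq [Hp | Hp] Hqp Hcenter; unfold between in *.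
  - pose proof (dY_tri x p w Vx Vp Vw); pose proof (dY_tri z p w Vz Vp Vw).
    pose proof (dY_tri p q w Vp Vq Vw).
    rewrite (dY_sym z p), (dY_sym q p), (dY_sym q w) in * by auto; lia.
  - pose proof (dY_tri y p w Vy Vp Vw); pose proof (dY_tri z p w Vz Vp Vw).
    pose proof (dY_tri p q w Vp Vq Vw).
    rewrite (dY_sym y p), (dY_sym q p), (dY_sym q w), (dY_sym z y) in * by auto; lia.
Qed.

Theorem ygromov_four x y z w : V x -> V y -> V z -> V w ->
  dY x y + dY z w <=
  Nat.max (dY x z + dY y w) (dY x w + dY y z) + 2 * (3 * thin_bound C δ + 1).
Proof.
  intros Vx Vy Vz Vw.
  destruct (dY_geo x y Vx Vy) as [σ Hσ].
  destruct (ytriangle_center x y w σ Vx Vy Vw Hσ) as [j [Hj Hcenter]].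
  destruct (ytriangle_thin x y z σ Vx Vy Vz Hσ j Hj) as [p [Vp [Hp Hjp]]].
  pose proof Hσ as [σV _].
  exact (four_point_of_center x y z w (σ j) p _ Vx Vy Vz Vw (σV j) Vp
           (ygeodesic_between σ x y Hσ j Hj) Hp Hjp Hcenter).
Qed.

End Comparison.

End HyperbolicSpace.

Section GroupFacts.
Variable G : Group.

Lemma gmul_Vr (x : G) : gmul x (ginv x) = gone.
Proof.
  rewrite <- (gmul_1l G (gmul x (ginv x))), <- (gmul_Vl G (ginv x)) at 1.
  rewrite <- gmul_assoc, (gmul_assoc G (ginv x) x (ginv x)), gmul_Vl, gmul_1l.
  apply gmul_Vl.
Qed.

Lemma gmul_1r (x : G) : gmul x gone = x.
Proof. now rewrite <- (gmul_Vl G x), gmul_assoc, gmul_Vr, gmul_1l. Qed.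

Lemma gmulK (x y : G) : gmul (ginv x) (gmul x y) = y.
Proof. now rewrite gmul_assoc, gmul_Vl, gmul_1l. Qed.

Lemma gmulKV (x y : G) : gmul x (gmul (ginv x) y) = y.
Proof. now rewrite gmul_assoc, gmul_Vr, gmul_1l. Qed.

Lemma ginv_unique (a b : G) : gmul a b = gone -> a = ginv b.
Proof. intros H; now rewrite <- (gmul_1r a), <- (gmul_Vr b), gmul_assoc, H, gmul_1l. Qed.

Lemma ginvK (x : G) : ginv (ginv x) = x.
Proof. symmetry; apply ginv_unique, gmul_Vr. Qed.

Lemma ginv_mul (x y : G) : ginv (gmul x y) = gmul (ginv y) (ginv x).
Proof.
  symmetry; apply ginv_unique.
  now rewrite <- gmul_assoc, gmulK, gmul_Vl.
Qed.

Lemma ginv1 : ginv (@gone G) = gone.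
Proof. symmetry; apply ginv_unique, gmul_1l. Qed.

Lemma hom_one (f : G -> G) : is_hom G f -> f gone = gone.
Proof.
  intros f_hom; set (e := f gone).
  assert (Ee : gmul e e = e) by (unfold e; now rewrite <- f_hom, gmul_1l).
  now rewrite <- (gmulK e e), Ee, gmul_Vl.
Qed.

Lemma hom_inv (f : G -> G) x : is_hom G f -> f (ginv x) = ginv (f x).
Proof. intros f_hom; apply ginv_unique; now rewrite <- f_hom, gmul_Vl, hom_one. Qed.

Lemma subgroup_mulV (V : G -> Prop) x y :
  is_subgroup G V -> V x -> V y -> V (gmul (ginv x) y).
Proof. intros [_ [V_mul V_inv]] Vx Vy; auto. Qed.

Lemma word_prod_app (l1 l2 : list G) :
  word_prod G (l1 ++ l2) = gmul (word_prod G l1) (word_prod G l2).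
Proof.
  induction l1 as [| s l1 IH]; simpl; [now rewrite gmul_1l |].
  now rewrite IH, gmul_assoc.
Qed.

Lemma word_prod_inv (l : list G) : word_prod G (rev (map ginv l)) = ginv (word_prod G l).
Proof.
  induction l as [| s l IH]; simpl; [symmetry; apply ginv1 |].
  rewrite word_prod_app, IH; simpl; rewrite gmul_1r; symmetry; apply ginv_mul.
Qed.

Section Words.
Variable S : G -> Prop.

Lemma word_len_le_mono g n m : word_len_le G S g n -> n <= m -> word_len_le G S g m.
Proof. intros [l [Hl [HS Hg]]] Hnm; exists l; repeat split; auto; lia. Qed.

Lemma word_len_le_one : word_len_le G S gone 0.
Proof. now exists []. Qed.

Lemma word_len_le_letter s : S s \/ S (ginv s) -> word_len_le G S s 1.
Proof. intros Hs; exists [s]; repeat split; auto; apply gmul_1r. Qed.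

Lemma word_len_le_mul g h n m :
  word_len_le G S g n -> word_len_le G S h m -> word_len_le G S (gmul g h) (n + m).
Proof.
  intros [l1 [Hl1 [HS1 <-]]] [l2 [Hl2 [HS2 <-]]]; exists (l1 ++ l2); repeat split.
  - rewrite length_app; lia.
  - now apply Forall_app.
  - apply word_prod_app.
Qed.

Lemma word_len_le_inv g n : word_len_le G S g n -> word_len_le G S (ginv g) n.
Proof.
  intros [l [Hl [HS <-]]]; exists (rev (map ginv l)); repeat split.
  - now rewrite length_rev, length_map.
  - apply Forall_rev, Forall_map; eapply Forall_impl; [| exact HS].
    intros s [Hs | Hs]; [right; now rewrite ginvK | now left].
  - apply word_prod_inv.
Qed.

Lemma in_gen_word_len g : in_gen G S g -> exists n, word_len_le G S g n.
Proof.
  intros Hg; apply Hg.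
  - split; [| split].
    + exists 0; apply word_len_le_one.
    + intros x y [n Hx] [m Hy]; exists (n + m); now apply word_len_le_mul.
    + intros x [n Hx]; exists n; now apply word_len_le_inv.
  - intros s Hs; exists 1; apply word_len_le_letter; now left.
Qed.

Lemma word_len_le_subgroup (K : G -> Prop) g n : is_subgroup G K ->
  (forall s, S s -> K s) -> word_len_le G S g n -> K g.
Proof.
  intros [K1 [K_mul K_inv]] SK [l [_ [HS <-]]].
  induction HS as [| s l [Hs | Hs] _ IH]; simpl; auto.
  rewrite <- (ginvK s); auto.
Qed.

Lemma word_len_le_in_gen g n : word_len_le G S g n -> in_gen G S g.
Proof. intros Hg K HK SK; exact (word_len_le_subgroup K g n HK SK Hg). Qed.

Lemma list_word_len_bound (L : list G) :
  (forall x, In x L -> exists n, word_len_le G S x n) ->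
  exists C, forall x, In x L -> word_len_le G S x C.
Proof.
  induction L as [| x L IH]; intros HL; [now exists 0 |].
  destruct (HL x (in_eq x L)) as [n Hx].
  destruct IH as [C HC]; [intros y Hy; apply HL; now right |].
  exists (Nat.max n C); intros y [<- | Hy].
  - apply word_len_le_mono with n; [exact Hx | lia].
  - apply word_len_le_mono with C; [now apply HC | lia].
Qed.

End Words.

Lemma word_len_le_map (f : G -> G) (S S' : G -> Prop) g n : is_hom G f ->
  (forall s, S s -> S' (f s)) -> word_len_le G S g n -> word_len_le G S' (f g) n.
Proof.
  intros f_hom SS' [l [Hl [HS <-]]]; exists (map f l); repeat split.
  - now rewrite length_map.
  - apply Forall_map; eapply Forall_impl; [| exact HS].
    intros s [Hs | Hs]; [left | right; rewrite <- hom_inv]; auto.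
  - clear Hl HS; induction l as [| s l IH]; simpl; [symmetry; now apply hom_one |].
    now rewrite f_hom, IH.
Qed.

Lemma word_len_le_subst (S S' : G -> Prop) C g n :
  (forall s, S' s -> word_len_le G S s C) -> word_len_le G S' g n ->
  word_len_le G S g (C * n).
Proof.
  intros HC [l [Hl [HS <-]]].
  apply word_len_le_mono with (C * length l); [| nia].
  clear Hl; induction HS as [| s l [Hs | Hs] _ IH]; simpl.
  - rewrite Nat.mul_0_r; apply word_len_le_one.
  - rewrite Nat.mul_succ_r, Nat.add_comm; apply word_len_le_mul; auto.
  - rewrite Nat.mul_succ_r, Nat.add_comm; apply word_len_le_mul; auto.
    rewrite <- (ginvK s); apply word_len_le_inv; auto.
Qed.

End GroupFacts.

(* Junk value [0] when [x^-1 y] is not a product of [S]-letters. *)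
Definition word_dist (G : Group) (S : G -> Prop) (x y : G) : nat :=
  epsilon (inhabits 0) (fun n => cay_dist G S x y n).

Lemma cay_dist_unique (G : Group) (S : G -> Prop) (x y : G) n m :
  cay_dist G S x y n -> cay_dist G S x y m -> n = m.
Proof. intros [Hn Hmin_n] [Hm Hmin_m]; specialize (Hmin_n _ Hm); specialize (Hmin_m _ Hn); lia. Qed.

Section WordMetric.
Variables (G : Group) (V S : G -> Prop).
Hypothesis V_sub : is_subgroup G V.
Hypothesis V_word : forall g, V g -> exists n, word_len_le G S g n.

Lemma word_dist_spec x y : V x -> V y -> cay_dist G S x y (word_dist G S x y).
Proof.
  intros Vx Vy; unfold word_dist; apply epsilon_spec.
  destruct (ex_least _ (V_word _ (subgroup_mulV G V x y V_sub Vx Vy))) as [n Hn].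
  now exists n.
Qed.

Lemma word_dist_le x y n : V x -> V y ->
  word_len_le G S (gmul (ginv x) y) n -> word_dist G S x y <= n.
Proof. intros Vx Vy; apply (word_dist_spec x y Vx Vy). Qed.

Lemma word_dist_word x y : V x -> V y -> word_len_le G S (gmul (ginv x) y) (word_dist G S x y).
Proof. intros Vx Vy; apply (word_dist_spec x y Vx Vy). Qed.

Lemma word_dist_refl x : V x -> word_dist G S x x = 0.
Proof.
  intros Vx; enough (word_dist G S x x <= 0) by lia.
  apply word_dist_le; auto; rewrite gmul_Vl; apply word_len_le_one.
Qed.

Lemma word_dist_sym x y : V x -> V y -> word_dist G S x y = word_dist G S y x.
Proof.
  assert (Hle : forall x y, V x -> V y -> word_dist G S x y <= word_dist G S y x).
  { intros a b Va Vb; apply word_dist_le; auto.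
    replace (gmul (ginv a) b) with (ginv (gmul (ginv b) a)) by now rewrite ginv_mul, ginvK.
    apply (word_len_le_inv G S), word_dist_word; auto. }
  intros Vx Vy; pose proof (Hle x y Vx Vy); pose proof (Hle y x Vy Vx); lia.
Qed.

Lemma word_dist_tri x y z : V x -> V y -> V z ->
  word_dist G S x z <= word_dist G S x y + word_dist G S y z.
Proof.
  intros Vx Vy Vz; apply word_dist_le; auto.
  replace (gmul (ginv x) z) with (gmul (gmul (ginv x) y) (gmul (ginv y) z)).
  - apply word_len_le_mul; apply word_dist_word; auto.
  - now rewrite <- gmul_assoc, gmulKV.
Qed.

Hypothesis S_V : forall s, S s -> V s.

(* The vertices [a * s_1 ... s_t] along a shortest word [s_1 ... s_m] for [a^-1 b]. *)
Lemma word_dist_geodesic a b : V a -> V b -> exists g : nat -> G,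
  (forall t, V (g t)) /\ g 0 = a /\ g (word_dist G S a b) = b /\
  forall i j, i <= j <= word_dist G S a b -> word_dist G S (g i) (g j) = j - i.
Proof.
  intros Va Vb; set (m := word_dist G S a b).
  destruct (word_dist_word a b Va Vb) as [l [Hl [HS Hab]]]; fold m in Hl.
  assert (Hlen : length l = m).
  { enough (m <= length l) by lia; apply word_dist_le; auto; now exists l. }
  set (g t := gmul a (word_prod G (firstn t l))).
  assert (Vg : forall t, V (g t)).
  { intros t; destruct V_sub as [_ [V_mul _]]; apply V_mul; [exact Va |].
    apply (word_len_le_subgroup G S V _ (length (firstn t l)) V_sub S_V).
    exists (firstn t l); repeat split; auto; now apply Forall_firstn. }
  assert (Hup : forall i j, i <= j <= m -> word_dist G S (g i) (g j) <= j - i).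
  { intros i j Hij; apply word_dist_le; auto.
    exists (skipn i (firstn j l)); repeat split.
    - rewrite length_skipn, length_firstn; lia.
    - now apply Forall_skipn, Forall_firstn.
    - unfold g; rewrite <- (firstn_skipn i (firstn j l)) at 2.
      rewrite firstn_firstn, Nat.min_l, word_prod_app, (gmul_assoc G a), gmulK by lia.
      reflexivity. }
  assert (g0 : g 0 = a) by apply gmul_1r.
  assert (gm : g m = b) by (unfold g; now rewrite <- Hlen, firstn_all, Hab, gmulKV).
  exists g; repeat split; auto.
  intros i j Hij; apply Nat.le_antisymm; [now apply Hup |].
  pose proof (word_dist_tri a (g i) b Va (Vg i) Vb).
  pose proof (word_dist_tri (g i) (g j) b (Vg i) (Vg j) Vb).
  pose proof (Hup 0 i ltac:(lia)); pose proof (Hup j m ltac:(lia)).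
  rewrite g0, gm in *; unfold m in *; lia.
Qed.

Lemma cayley_hyperbolic_word_dist : cayley_hyperbolic G V S -> exists δ,
  forall x y z w, V x -> V y -> V z -> V w ->
  word_dist G S x y + word_dist G S z w <=
  Nat.max (word_dist G S x z + word_dist G S y w) (word_dist G S x w + word_dist G S y z)
  + 2 * δ.
Proof.
  intros [δ Hδ]; exists δ; intros x y z w Vx Vy Vz Vw.
  apply (Hδ x y z w); auto; apply word_dist_spec; auto.
Qed.

Lemma cayley_hyperbolic_of_word_dist δ :
  (forall x y z w, V x -> V y -> V z -> V w ->
   word_dist G S x y + word_dist G S z w <=
   Nat.max (word_dist G S x z + word_dist G S y w) (word_dist G S x w + word_dist G S y z)
   + 2 * δ) ->
  cayley_hyperbolic G V S.
Proof.
  intros Hδ; exists δ; intros x y z w Vx Vy Vz Vw dxy dzw dxz dyw dxw dyz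
    Hxy Hzw Hxz Hyw Hxw Hyz.
  repeat match goal with
  | H : cay_dist G S ?a ?b ?n |- _ =>
      rewrite (cay_dist_unique G S a b n (word_dist G S a b) H) by (apply word_dist_spec; auto);
      clear H
  end.
  now apply Hδ.
Qed.

End WordMetric.

Theorem subgroup_cayley_hyperbolic (G : Group) (S S' V : G -> Prop) C :
  (forall g, exists n, word_len_le G S g n) -> cayley_hyperbolic G (fun _ => True) S ->
  is_subgroup G V -> (forall s, S' s -> V s) ->
  (forall g n, V g -> word_len_le G S g n -> word_len_le G S' g n) ->
  (forall s, S' s -> word_len_le G S s C) ->
  cayley_hyperbolic G V S'.
Proof.
  intros S_word S_hyp V_sub S'_V S'_short S'_len.
  assert (T_sub : is_subgroup G (fun _ => True)) by now repeat split.
  assert (T_word : forall g, True -> exists n, word_len_le G S g n) by auto.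
  assert (V_word : forall g, V g -> exists n, word_len_le G S' g n).
  { intros g Vg; destruct (S_word g) as [n Hn]; eauto. }
  destruct (cayley_hyperbolic_word_dist G _ S T_sub T_word S_hyp) as [δ Hδ].
  apply (cayley_hyperbolic_of_word_dist G V S' V_sub V_word (3 * thin_bound (C + 1) δ + 1)).
  set (d := word_dist G S); set (dY := word_dist G S').
  assert (d_geo : forall a b, exists g : nat -> G, g 0 = a /\ g (d a b) = b /\
                  forall i j, i <= j <= d a b -> d (g i) (g j) = j - i).
  { intros a b; destruct (word_dist_geodesic G _ S T_sub T_word (fun _ _ => I) a b I I)
      as [g [_ Hg]]; now exists g. }
  assert (dY_le_d : forall a b, V a -> V b -> dY a b <= d a b).
  { intros a b Va Vb; apply (word_dist_le G V S' V_sub V_word); auto.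
    apply S'_short; [now apply subgroup_mulV |]; now apply (word_dist_word G _ S T_sub). }
  assert (d_le_of_dY_le1 : forall a b, V a -> V b -> dY a b <= 1 -> d a b <= C + 1).
  { intros a b Va Vb Hab; apply (word_dist_le G _ S T_sub T_word); auto.
    apply word_len_le_mono with (C * dY a b); [| nia].
    apply (word_len_le_subst G S S' C _ _ S'_len); now apply (word_dist_word G V S' V_sub V_word). }
  intros x y z w Vx Vy Vz Vw.
  exact (ygromov_four G d
    (fun x => word_dist_refl G _ S T_sub T_word x I)
    (fun x y => word_dist_sym G _ S T_sub T_word x y I I)
    (fun x y z => word_dist_tri G _ S T_sub T_word x y z I I I)
    d_geo δ (fun x y z w => Hδ x y z w I I I I)
    V dY (C + 1) ltac:(lia)
    (word_dist_refl G V S' V_sub V_word) (word_dist_sym G V S' V_sub V_word)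
    (word_dist_tri G V S' V_sub V_word) (word_dist_geodesic G V S' V_sub V_word S'_V)
    dY_le_d d_le_of_dY_le1 x y z w Vx Vy Vz Vw).
Qed.

Section Retract.
Variables (G : Group) (R : G -> Prop) (A : list (G -> Prop)) (X : list G) (r : G -> G).
Hypothesis r_hom : is_hom G r.
Hypothesis r_R : forall g, R (r g).
Hypothesis r_id : forall g, R g -> r g = g.
Hypothesis A_R : forall Ai, In Ai A -> forall g, Ai g -> R g.

Lemma rel_gens_retract s : rel_gens G X A s -> rel_gens G (map r X) A (r s).
Proof.
  intros [Hs | [Ai [HAi Hs]]]; [left; now apply in_map |].
  right; exists Ai; split; [exact HAi |]; rewrite r_id; [exact Hs | exact (A_R Ai HAi s Hs)].
Qed.

Lemma rel_gens_retract_sub s : rel_gens G (map r X) A s -> R s.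
Proof.
  intros [Hs | [Ai [HAi Hs]]]; [| exact (A_R Ai HAi s Hs)].
  apply in_map_iff in Hs as [x [<- _]]; apply r_R.
Qed.

Lemma retract_word_len g n : R g ->
  word_len_le G (rel_gens G X A) g n -> word_len_le G (rel_gens G (map r X) A) g n.
Proof.
  intros Rg Hg; rewrite <- (r_id g Rg).
  exact (word_len_le_map G r _ _ g n r_hom rel_gens_retract Hg).
Qed.

Lemma retract_rel_gens_len : (forall g, exists n, word_len_le G (rel_gens G X A) g n) ->
  exists C, forall s, rel_gens G (map r X) A s -> word_len_le G (rel_gens G X A) s C.
Proof.
  intros S_word.
  destruct (list_word_len_bound G (rel_gens G X A) (map r X)) as [C HC]; [auto |].
  exists (Nat.max C 1); intros s [Hs | Hs].
  - apply word_len_le_mono with C; [now apply HC | lia].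
  - apply word_len_le_mono with 1; [| lia].
    apply word_len_le_letter; left; now right.
Qed.

End Retract.

Theorem lemma3p3 (G : Group) (R : G -> Prop) (A : list (G -> Prop)) :
  is_retract G R ->
  (forall Ai, In Ai A -> is_subgroup G Ai /\ (forall g, Ai g -> R g)) ->
  weakly_hyperbolic_rel G (fun _ => True) A ->
  weakly_hyperbolic_rel G R A.
Proof.
  intros [R_sub [r [r_hom [r_R r_id]]]] HA [X [_ [X_gen X_hyp]]].
  assert (A_R : forall Ai, In Ai A -> forall g, Ai g -> R g) by apply HA.
  assert (S_word : forall g, exists n, word_len_le G (rel_gens G X A) g n)
    by (intros g; apply in_gen_word_len, X_gen; exact I).
  destruct (retract_rel_gens_len G A X r S_word) as [C HC].
  exists (map r X); split; [| split].
  - intros x Hx; apply in_map_iff in Hx as [y [<- _]]; apply r_R.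
  - intros g; split.
    + intros Rg; destruct (S_word g) as [n Hn].
      exact (word_len_le_in_gen G _ g n (retract_word_len G R A X r r_hom r_id A_R g n Rg Hn)).
    + intros Hg; apply Hg; [exact R_sub |].
      exact (rel_gens_retract_sub G R A X r r_R A_R).
  - apply (subgroup_cayley_hyperbolic G _ _ R C S_word X_hyp R_sub
             (rel_gens_retract_sub G R A X r r_R A_R)); [| exact HC].
    exact (retract_word_len G R A X r r_hom r_id A_R).
Qed.
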